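(* With $\mathrm X$, $h$, $R$, $(\mathrm U_k)$ and $R_k$ as follows, the inductive limit topology on $R=\bigcup_k R_k$ (a set $W\subseteq R$ is open iff $W\cap R_k$ is open in $R_k$ for all $k$, each $R_k$ carrying the subspace topology from $\mathbb Z\times\mathrm X\times\mathbb Z\times\mathrm X$) coincides with the subspace topology on $R$ from the product topology of $\mathbb Z\times\mathrm X\times\mathbb Z\times\mathrm X$. Here: $\mathrm X$ is the Cantor set, $\mathrm U,\mathrm V\subseteq\mathrm X$ open with $\mathrm U\neq\mathrm X$, $h:\mathrm U\to\mathrm V$ a homeomorphism, $\mathrm X_{-n}=\mathrm{dom}(h^n)$, $R=\{(r,x,s,y): x\in\mathrm X_{s-r},\ h^{r-s}(x)=y\}$; $(\mathrm U_k)_{k\ge0}$ is an increasing sequence of clopen sets with union $\mathrm U$, $\mathrm X^k_{-n}=\mathrm{dom}((h|_{\mathrm U_k})^n)$, and $R_k=\{(r,x,s,y): x\in\mathrm X^k_{s-r},\ h^{r-s}(x)=y\}$.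
   Context: $\mathbb Z$ is discrete. $\mathrm{dom}(h^n)$ denotes the domain of the $n$-fold composition of the partial bijection $h$ (for $n<0$, of $(h^{-1})^{|n|}$; $\mathrm{dom}(h^0)=\mathrm X$). It holds that $R_k\subseteq R_{k+1}$ and $R=\bigcup_kR_k$. *)

From Stdlib Require Import ZArith.
Open Scope Z_scope.

(** The Cantor set, realised as the Cantor space {0,1}^N with the product topology. *)
Definition X := nat -> bool.

Definition agree (n : nat) (x y : X) : Prop := forall i : nat, (i < n)%nat -> x i = y i.

(** Open subsets of X (product topology of the discrete {0,1}). *)
Definition openX (O : X -> Prop) : Prop :=
  forall x, O x -> exists n : nat, forall y, agree n x y -> O y.

Definition clopenX (O : X -> Prop) : Prop :=
  openX O /\ openX (fun x => ~ O x).

Definition cont_on (A : X -> Prop) (f : X -> X) : Prop :=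
  forall O, openX O -> exists O', openX O' /\ forall x, A x -> (O (f x) <-> O' x).

Definition homeo_UV (U V : X -> Prop) (h g : X -> X) : Prop :=
  (forall x, U x -> V (h x)) /\ (forall y, V y -> U (g y)) /\
  (forall x, U x -> g (h x) = x) /\ (forall y, V y -> h (g y) = y) /\
  cont_on U h /\ cont_on V g.

(** x in dom (f^n) for the partial map f with domain D (n : nat). *)
Definition natdom (D : X -> Prop) (f : X -> X) (n : nat) (x : X) : Prop :=
  forall i : nat, (i < n)%nat -> D (Nat.iter i f x).

(** Domain and value of the z-fold power (z : Z) of a partial bijection with domain D,
    map f, range E and inverse g; for z < 0 it is the |z|-fold power of the inverse
    (domain E, map g).  dom (f^0) = X. *)
Definition zdom (D E : X -> Prop) (f g : X -> X) (z : Z) (x : X) : Prop :=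
  if Z.leb 0 z then natdom D f (Z.to_nat z) x else natdom E g (Z.to_nat (- z)) x.

Definition zpow (f g : X -> X) (z : Z) (x : X) : X :=
  if Z.leb 0 z then Nat.iter (Z.to_nat z) f x else Nat.iter (Z.to_nat (- z)) g x.

Definition T := (Z * X * Z * X)%type.

Definition Rel (D E : X -> Prop) (f g : X -> X) (p : T) : Prop :=
  match p with
  | (r, x, s, y) => zdom D E f g (r - s) x /\ zpow f g (r - s) x = y
  end.

Definition img (h : X -> X) (A : X -> Prop) (y : X) : Prop := exists x, A x /\ h x = y.

(** Open sets of Z x X x Z x X (Z discrete, product topology). *)
Definition openT (O : T -> Prop) : Prop :=
  forall r x s y, O (r, x, s, y) ->
    exists n : nat, forall x' y', agree n x x' -> agree n y y' -> O (r, x', s, y').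

Definition open_in (S W : T -> Prop) : Prop :=
  exists O, openT O /\ forall p, (W p <-> (O p /\ S p)).

From Stdlib Require Import ZArith Lia.

(* Write R_k = R ∩ D_k, where D_k ⊆ Z × X × Z × X is the set of
   points (r,x,s,y) with x ∈ dom((h|U_k)^(r-s)).  Each D_k is open, because the
   domain of a power of a partial homeomorphism with open domain and range is
   open.  Moreover R = ⋃_k R_k: a point of R only involves the finitely many
   iterates x, h x, ..., each of which lies in some U_k, and the U_k increase.
   The theorem is then an instance of a general fact about subspaces S of a
   topological space covered by relatively open pieces S ∩ D_k: a subset W ⊆ S
   is open in S iff each W ∩ S_k is open in S_k. *)

Lemma agree_mono (m n : nat) (x y : X) :
  (m <= n)%nat -> agree n x y -> agree m x y.
Proof. intros Hmn Hagree i Hi. apply Hagree. lia. Qed.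

Lemma openX_and (A B : X -> Prop) :
  openX A -> openX B -> openX (fun x => A x /\ B x).
Proof.
  intros HA HB x [Ax Bx].
  destruct (HA x Ax) as [n1 H1], (HB x Bx) as [n2 H2].
  exists (Nat.max n1 n2). intros y Hy. split.
  - apply H1. apply (agree_mono n1 (Nat.max n1 n2)); [lia | exact Hy].
  - apply H2. apply (agree_mono n2 (Nat.max n1 n2)); [lia | exact Hy].
Qed.

Lemma openT_and (A B : T -> Prop) :
  openT A -> openT B -> openT (fun p => A p /\ B p).
Proof.
  intros HA HB r x s y [Ap Bp].
  destruct (HA r x s y Ap) as [n1 H1], (HB r x s y Bp) as [n2 H2].
  exists (Nat.max n1 n2). intros x' y' Hx Hy. split.
  - apply H1; apply (agree_mono n1 (Nat.max n1 n2)); auto; lia.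
  - apply H2; apply (agree_mono n2 (Nat.max n1 n2)); auto; lia.
Qed.

(* A subset W of a subspace S is open in S as soon as each of its points has an
   open neighbourhood whose trace on S stays inside W: the union of all such
   neighbourhoods is an open set cutting out W. *)
Lemma open_in_of_local (S W : T -> Prop) :
  (forall p, W p -> S p) ->
  (forall p, W p -> exists O, openT O /\ O p /\ forall q, O q -> S q -> W q) ->
  open_in S W.
Proof.
  intros HWS Hlocal.
  exists (fun q => exists O, (openT O /\ forall q, O q -> S q -> W q) /\ O q).
  split.
  - intros r x s y [O [[HO Htrace] Oq]].
    destruct (HO r x s y Oq) as [n Hn].
    exists n. intros x' y' Hx Hy. exists O. auto.
  - intros p. split.
    + intros Wp. destruct (Hlocal p Wp) as [O [HO [Op Htrace]]].
      split; [exists O; auto | auto].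
    + intros [[O [[_ Htrace] Op]] Sp]. auto.
Qed.

Lemma open_in_restrict (S S' W : T -> Prop) :
  (forall p, S' p -> S p) -> open_in S W -> open_in S' (fun p => W p /\ S' p).
Proof.
  intros Hsub [O [HO HW]]. exists O. split; [exact HO |].
  intros p. split.
  - intros [Wp S'p]. split; [apply HW, Wp | exact S'p].
  - intros [Op S'p]. split; [apply HW; auto | exact S'p].
Qed.

Lemma open_in_of_open_cover (S W : T -> Prop) (Sk D : nat -> T -> Prop) :
  (forall k, openT (D k)) ->
  (forall k p, Sk k p <-> S p /\ D k p) ->
  (forall p, S p -> exists k, Sk k p) ->
  (forall p, W p -> S p) ->
  (forall k, open_in (Sk k) (fun p => W p /\ Sk k p)) ->
  open_in S W.
Proof.
  intros HD HSk Hcover HWS Hpieces.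
  apply open_in_of_local; [exact HWS |].
  intros p Wp. destruct (Hcover p (HWS p Wp)) as [k Skp].
  destruct (Hpieces k) as [O [HO HWk]].
  exists (fun q => O q /\ D k q). split; [apply openT_and; auto |]. split.
  - split; [apply HWk; auto | apply HSk, Skp].
  - intros q [Oq Dq] Sq. apply HWk. split; [exact Oq | apply HSk; auto].
Qed.

Lemma cont_on_sub (A B : X -> Prop) (f : X -> X) :
  (forall x, A x -> B x) -> cont_on B f -> cont_on A f.
Proof.
  intros Hsub Hf O HO. destruct (Hf O HO) as [O' [HO' Heq]]. eauto.
Qed.

(* The image of an open subset A ⊆ U under a homeomorphism h : U -> V with V open
   is open, being V ∩ g⁻¹(A). *)
Lemma img_open (U V A : X -> Prop) (h g : X -> X) :
  homeo_UV U V h g -> openX V -> openX A -> (forall x, A x -> U x) ->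
  openX (img h A).
Proof.
  intros [hUV [_ [hgh [hhg [_ hg]]]]] HV HA HAU.
  destruct (hg A HA) as [O' [HO' Hpre]].
  assert (Himg : forall y, img h A y <-> V y /\ O' y).
  { intros y. split.
    - intros [x [Ax <-]]. assert (Vhx : V (h x)) by auto.
      split; [exact Vhx |]. apply Hpre; [exact Vhx |]. rewrite hgh; auto.
    - intros [Vy O'y]. exists (g y). split; [apply Hpre; auto | auto]. }
  intros y Hy. apply Himg in Hy.
  destruct (openX_and V O' HV HO' y Hy) as [n Hn].
  exists n. intros z Hz. apply Himg, Hn, Hz.
Qed.

Lemma natdom_S (D : X -> Prop) (f : X -> X) (n : nat) (x : X) :
  natdom D f (S n) x <-> D x /\ natdom D f n (f x).
Proof.
  split.
  - intros H. split.
    + apply (H 0%nat). lia.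
    + intros i Hi. rewrite <- Nat.iter_succ_r. apply H. lia.
  - intros [Dx Hn] [|i] Hi; [exact Dx |].
    rewrite Nat.iter_succ_r. apply Hn. lia.
Qed.

Lemma natdom_open (D : X -> Prop) (f : X -> X) :
  openX D -> cont_on D f -> forall n, openX (natdom D f n).
Proof.
  intros HD Hf n. induction n as [|n IH].
  - intros x _. exists 0%nat. intros y _ i Hi. lia.
  - destruct (Hf _ IH) as [O' [HO' Hpre]].
    intros x Hx. apply natdom_S in Hx. destruct Hx as [Dx Hnx].
    assert (O'x : O' x) by (apply Hpre; auto).
    destruct (openX_and D O' HD HO' x (conj Dx O'x)) as [m Hm].
    exists m. intros y Hy. destruct (Hm y Hy) as [Dy O'y].
    apply natdom_S. split; [exact Dy | apply Hpre; auto].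
Qed.

Lemma zdom_open (D E : X -> Prop) (f g : X -> X) (z : Z) :
  openX D -> cont_on D f -> openX E -> cont_on E g -> openX (zdom D E f g z).
Proof.
  intros. unfold zdom. destruct (Z.leb 0 z); apply natdom_open; auto.
Qed.

Lemma zdom_mono (D E D' E' : X -> Prop) (f g : X -> X) (z : Z) (x : X) :
  (forall x, D x -> D' x) -> (forall x, E x -> E' x) ->
  zdom D E f g z x -> zdom D' E' f g z x.
Proof.
  unfold zdom, natdom. intros HD HE.
  destruct (Z.leb 0 z); intros H i Hi; auto.
Qed.

Lemma incr_mono (Dk : nat -> X -> Prop) :
  (forall k x, Dk k x -> Dk (S k) x) ->
  forall k k' x, (k <= k')%nat -> Dk k x -> Dk k' x.
Proof. intros Hincr k k' x Hle. induction Hle; auto. Qed.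

(* If D is the increasing union of the Dk, then dom(f^n) is the increasing union
   of the dom((f|Dk)^n): only finitely many iterates have to be captured. *)
Lemma natdom_exhaust (D : X -> Prop) (Dk : nat -> X -> Prop) (f : X -> X) :
  (forall k x, Dk k x -> Dk (S k) x) -> (forall x, D x -> exists k, Dk k x) ->
  forall n x, natdom D f n x -> exists k, natdom (Dk k) f n x.
Proof.
  intros Hincr Hunion n. induction n as [|n IH]; intros x Hx.
  - exists 0%nat. intros i Hi. lia.
  - apply natdom_S in Hx. destruct Hx as [Dx Hnx].
    destruct (Hunion x Dx) as [k1 Hk1], (IH (f x) Hnx) as [k2 Hk2].
    exists (Nat.max k1 k2). apply natdom_S. split.
    + apply (incr_mono Dk Hincr k1); [lia | exact Hk1].
    + intros i Hi. apply (incr_mono Dk Hincr k2); [lia | apply Hk2, Hi].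
Qed.

Lemma zdom_exhaust (D E : X -> Prop) (Dk Ek : nat -> X -> Prop) (f g : X -> X) :
  (forall k x, Dk k x -> Dk (S k) x) -> (forall x, D x -> exists k, Dk k x) ->
  (forall k x, Ek k x -> Ek (S k) x) -> (forall x, E x -> exists k, Ek k x) ->
  forall z x, zdom D E f g z x -> exists k, zdom (Dk k) (Ek k) f g z x.
Proof.
  intros. unfold zdom in *. destruct (Z.leb 0 z); eapply natdom_exhaust; eauto.
Qed.

Definition dom_set (D E : X -> Prop) (f g : X -> X) (p : T) : Prop :=
  match p with (r, x, s, y) => zdom D E f g (r - s) x end.

Lemma dom_set_open (D E : X -> Prop) (f g : X -> X) :
  openX D -> cont_on D f -> openX E -> cont_on E g -> openT (dom_set D E f g).
Proof.
  intros HD Hf HE Hg r x s y Hx.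
  destruct (zdom_open D E f g (r - s) HD Hf HE Hg x Hx) as [n Hn].
  exists n. intros x' y' Hx' _. apply Hn, Hx'.
Qed.

Lemma Rel_restrict (D E D' E' : X -> Prop) (f g : X -> X) (p : T) :
  (forall x, D' x -> D x) -> (forall x, E' x -> E x) ->
  Rel D' E' f g p <-> Rel D E f g p /\ dom_set D' E' f g p.
Proof.
  intros HD HE. destruct p as [[[r x] s] y]. simpl. split.
  - intros [Hdom Hval]. repeat split; auto. eapply zdom_mono; eauto.
  - intros [[_ Hval] Hdom]. auto.
Qed.

Lemma Rel_exhaust (D E : X -> Prop) (Dk Ek : nat -> X -> Prop) (f g : X -> X) :
  (forall k x, Dk k x -> Dk (S k) x) -> (forall x, D x -> exists k, Dk k x) ->
  (forall k x, Ek k x -> Ek (S k) x) -> (forall x, E x -> exists k, Ek k x) ->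
  forall p, Rel D E f g p -> exists k, Rel (Dk k) (Ek k) f g p.
Proof.
  intros HDincr HDunion HEincr HEunion [[[r x] s] y] [Hdom Hval].
  destruct (zdom_exhaust D E Dk Ek f g HDincr HDunion HEincr HEunion _ _ Hdom)
    as [k Hk].
  exists k. split; assumption.
Qed.

Theorem mainTheorem9
  (U V : X -> Prop) (h g : X -> X) (Us : nat -> X -> Prop)
  (hU : openX U) (hV : openX V) (hUX : exists x, ~ U x)
  (hh : homeo_UV U V h g)
  (hUs_clopen : forall k, clopenX (Us k))
  (hUs_incr : forall k x, Us k x -> Us (S k) x)
  (hUs_union : forall x, U x <-> exists k, Us k x) :
  let R := Rel U V h g in
  let Rk := fun k : nat => Rel (Us k) (img h (Us k)) h g in
  forall W : T -> Prop, (forall p, W p -> R p) ->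
    ((forall k : nat, open_in (Rk k) (fun p => W p /\ Rk k p)) <-> open_in R W).
Proof.
  intros R Rk W HWR.
  pose proof hh as [hUV [hVU [_ [hhg [hh_cont hg_cont]]]]].
  assert (UsU : forall k x, Us k x -> U x) by (intros k x Hx; apply hUs_union; eauto).
  assert (imgV : forall k y, img h (Us k) y -> V y)
    by (intros k y [x [Hx <-]]; eauto).
  assert (img_incr : forall k y, img h (Us k) y -> img h (Us (S k)) y)
    by (intros k y [x [Hx <-]]; exists x; auto).
  assert (img_union : forall y, V y -> exists k, img h (Us k) y).
  { intros y Vy. destruct (proj1 (hUs_union (g y)) (hVU y Vy)) as [k Hk].
    exists k, (g y). auto. }
  assert (stage_char : forall k p, Rk k p <-> R p /\ dom_set (Us k) (img h (Us k)) h g p)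
    by (intros; apply Rel_restrict; eauto).
  split.
  - apply (open_in_of_open_cover R W Rk (fun k => dom_set (Us k) (img h (Us k)) h g));
      [| exact stage_char | | exact HWR].
    + intros k. apply dom_set_open.
      * apply hUs_clopen.
      * apply (cont_on_sub _ U); eauto.
      * apply (img_open U V _ h g hh hV); [apply hUs_clopen | apply UsU].
      * apply (cont_on_sub _ V); eauto.
    + apply Rel_exhaust; auto. intros x Ux. apply hUs_union, Ux.
  - intros HW k. apply (open_in_restrict R); [| exact HW].
    intros p Hp. apply (proj1 (stage_char k p) Hp).
Qed.
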